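(* Let $g(x)=1-2e^{-x}+\frac{1-e^{-x}}{x}$. For all $0<p<1$ and $s\in\mathbb{Z}^+$, \[ g(sp)\leqslant h^0_{\{1,2\}}(s,p)\leqslant g(sp)+\left(1+\frac{1}{\sqrt e}\right)\frac{p}{1-p}, \] and \[ h^0_{J_{sym}}(s,p)\leqslant\frac12\left(g(sp)+e^{-2sp}g(-sp)\right)+\frac12\left(1+\frac{2}{e^{3/4}}\right)\frac{p}{1-p}+\frac{4e^{3/2}-1}{6e^3}\,\frac{p^2}{(1-p^2)^2}. \]
   Context: $\mathbb{Z}^+$ is the set of positive integers and $J_{sym}=\{2\}\cup\{2m+1:m\geqslant0\}$. For $J\subset\mathbb{Z}^+$, integer $s\geqslant1$ and $0<p<1$, \[ h_J^0(s,p)=\frac{(1-p)^s}{p^2}\left(\frac{p^2}{(1-p)^{s+1}}+\frac{p}{s}\frac{1}{(1-p)^s}-\sum_{k\in J}k\frac{(k+s-2)!}{(k-1)!\,s!}p^k\right). \] In particular $h^0_{\{1,2\}}(s,p)=\frac{1}{1-p}-2(1-p)^s+\frac{1-(1-p)^s}{ps}$ and $h^0_{J_{sym}}(s,p)=\frac12\left(h^0_{\{1,2\}}(s,p)+\frac{(1-p)^s}{(1+p)^s}h^0_{\{1,2\}}(s,-p)\right)$, where $h^0_{\{1,2\}}(s,-p)$ denotes the closed-form expression evaluated at $-p$. *)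

From Stdlib Require Import Reals.
Open Scope R_scope.

Definition g (x : R) : R := 1 - 2 * exp (- x) + (1 - exp (- x)) / x.

(* Closed form of h^0_{1,2}(s,p) from the context, as a function of a real p
   (so that it can also be evaluated at -p):
   1/(1-p) - 2(1-p)^s + (1-(1-p)^s)/(p s). *)
Definition h12 (s : nat) (p : R) : R :=
  1 / (1 - p) - 2 * (1 - p) ^ s + (1 - (1 - p) ^ s) / (p * INR s).

Definition hsym (s : nat) (p : R) : R :=
  / 2 * (h12 s p + (1 - p) ^ s / (1 + p) ^ s * h12 s (- p)).

(* Write x = s p, a = (1-p)^s and c = ((1-p)/(1+p))^s.  Both
   h^0_{1,2}(s,p) - g(x) and 2 h^0_{J_sym}(s,p) - (g(x) + e^{-2x} g(-x)) are
   exact rational expressions in p, x and the gaps e^{-x} - a and e^{-2x} - c.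
   For 0 < a <= b one has 0 <= b - a <= b (ln b - ln a), so the gaps are
   controlled by -ln(1-p) <= p + p^2/(2(1-p)) and
   2p <= ln(1+p) - ln(1-p) <= 2p + 2p^3/(3(1-p^2)); this leaves factors
   (x + k) e^{-x}, which are at most e^{k-1}. *)

From Stdlib Require Import Reals Lra.
From Coquelicot Require Import Coquelicot.
Open Scope R_scope.

Lemma le_of_is_derive_nonneg (f df : R -> R) (a b : R) : a <= b ->
  (forall c, a <= c <= b -> is_derive f c (df c)) ->
  (forall c, a <= c <= b -> 0 <= df c) -> f a <= f b.
Proof.
  intros [hab | ->] hder hpos; [| lra].
  destruct (MVT_cor2 f df a b hab) as [c [hfc hc]].
  - intros c hc; apply is_derive_Reals, hder; exact hc.
  - assert (0 <= df c) by (apply hpos; lra). nra.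
Qed.

Lemma neg_ln_one_sub_le (p : R) : 0 <= p < 1 ->
  - ln (1 - p) <= p + p ^ 2 / (2 * (1 - p)).
Proof.
  intros hp.
  pose (f y := y + y ^ 2 / (2 * (1 - y)) + ln (1 - y)).
  enough (f 0 <= f p) by (unfold f in *; rewrite Rminus_0_r, ln_1 in *; lra).
  apply (le_of_is_derive_nonneg f (fun y => y ^ 2 / (2 * (1 - y) ^ 2))); try lra.
  - intros c hc; unfold f; auto_derive; [lra | field; lra].
  - intros c hc; apply Rmult_le_pos; [nra |].
    apply Rlt_le, Rinv_0_lt_compat; nra.
Qed.

Lemma ln1p_sub_ln1m_ge (p : R) : 0 <= p < 1 -> 2 * p <= ln (1 + p) - ln (1 - p).
Proof.
  intros hp.
  pose (f y := ln (1 + y) - ln (1 - y) - 2 * y).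
  enough (f 0 <= f p) by (unfold f in *; rewrite Rminus_0_r, Rplus_0_r, ln_1 in *; lra).
  apply (le_of_is_derive_nonneg f (fun y => 2 * y ^ 2 / (1 - y ^ 2))); try lra.
  - intros c hc; unfold f; auto_derive; [lra | field; nra].
  - intros c hc; apply Rmult_le_pos; [nra |].
    apply Rlt_le, Rinv_0_lt_compat; nra.
Qed.

Lemma ln1p_sub_ln1m_le (p : R) : 0 <= p < 1 ->
  ln (1 + p) - ln (1 - p) <= 2 * p + 2 * p ^ 3 / (3 * (1 - p ^ 2)).
Proof.
  intros hp.
  pose (f y := 2 * y + 2 * y ^ 3 / (3 * (1 - y ^ 2)) - ln (1 + y) + ln (1 - y)).
  enough (f 0 <= f p) by (unfold f in *; rewrite Rminus_0_r, Rplus_0_r, ln_1 in *; lra).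
  apply (le_of_is_derive_nonneg f (fun y => 4 * y ^ 4 / (3 * (1 - y ^ 2) ^ 2))); try lra.
  - intros c hc; unfold f; auto_derive; [repeat split; nra | field; nra].
  - intros c hc; apply Rmult_le_pos; [nra |].
    apply Rlt_le, Rinv_0_lt_compat; assert (0 < 1 - c ^ 2) by nra; nra.
Qed.

Lemma ln_le_sub_1 (y : R) : 0 < y -> ln y <= y - 1.
Proof. intros hy; pose proof (exp_ineq1_le (ln y)); rewrite exp_ln in *; lra. Qed.

Lemma ln_div (a b : R) : 0 < a -> 0 < b -> ln (a / b) = ln a - ln b.
Proof.
  intros ha hb; unfold Rdiv; rewrite ln_mult, ln_Rinv; try apply Rinv_0_lt_compat; lra.
Qed.

Lemma sub_bounds_of_ln_le (a b : R) : 0 < a -> 0 < b -> ln a <= ln b ->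
  0 <= b - a <= b * (ln b - ln a).
Proof.
  intros ha hb hab.
  pose proof (ln_le_sub_1 (a / b) (Rdiv_lt_0_compat a b ha hb)) as hle.
  rewrite ln_div in hle by lra.
  assert (b - a = - b * (a / b - 1)) as -> by (field; lra).
  split.
  - pose proof (ln_le_sub_1 (b / a) (Rdiv_lt_0_compat b a hb ha)) as hge.
    rewrite ln_div in hge by lra.
    assert (- b * (a / b - 1) = a * (b / a - 1)) as -> by (field; lra). nra.
  - nra.
Qed.

Lemma add_mul_exp_neg_le (x c : R) : (x + c) * exp (- x) <= exp (c - 1).
Proof.
  replace (exp (c - 1)) with (exp (x + c - 1) * exp (- x))
    by (rewrite <- exp_plus; f_equal; ring).
  apply Rmult_le_compat_r; [left; apply exp_pos |].
  pose proof (exp_ineq1_le (x + c - 1)); lra.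
Qed.

Lemma one_sub_pow_gap (n : nat) (p : R) : 0 < p < 1 ->
  0 <= exp (- (INR n * p)) - (1 - p) ^ n
    <= exp (- (INR n * p)) * (INR n * p) * (p / (1 - p)) / 2.
Proof.
  intros hp.
  pose proof (pos_INR n).
  assert (hln : ln ((1 - p) ^ n) = INR n * ln (1 - p)) by (apply ln_pow; lra).
  pose proof (ln_le_sub_1 (1 - p)) as hl1; pose proof (neg_ln_one_sub_le p) as hl2.
  destruct (sub_bounds_of_ln_le ((1 - p) ^ n) (exp (- (INR n * p)))) as [hlo hup].
  - apply pow_lt; lra.
  - apply exp_pos.
  - rewrite hln, ln_exp; nra.
  - split; [exact hlo |]. rewrite hln, ln_exp in hup.
    eapply Rle_trans; [exact hup |].
    replace (exp (- (INR n * p)) * (INR n * p) * (p / (1 - p)) / 2)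
      with (exp (- (INR n * p)) * (INR n * (p ^ 2 / (2 * (1 - p))))) by (field; lra).
    apply Rmult_le_compat_l; [left; apply exp_pos |]. nra.
Qed.

Lemma pow_ratio_gap (n : nat) (p : R) : 0 < p < 1 ->
  0 <= exp (- (2 * INR n * p)) - (1 - p) ^ n / (1 + p) ^ n
    <= exp (- (2 * INR n * p)) * (INR n * p) * (2 * p ^ 2 / (3 * (1 - p ^ 2))).
Proof.
  intros hp.
  pose proof (pos_INR n).
  assert (hln : ln ((1 - p) ^ n / (1 + p) ^ n) = INR n * (ln (1 - p) - ln (1 + p))).
  { rewrite ln_div, !ln_pow by (try apply pow_lt; lra). ring. }
  pose proof (ln1p_sub_ln1m_ge p) as hl1; pose proof (ln1p_sub_ln1m_le p) as hl2.
  destruct (sub_bounds_of_ln_le ((1 - p) ^ n / (1 + p) ^ n) (exp (- (2 * INR n * p))))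
    as [hlo hup].
  - apply Rdiv_lt_0_compat; apply pow_lt; lra.
  - apply exp_pos.
  - rewrite hln, ln_exp; nra.
  - split; [exact hlo |]. rewrite hln, ln_exp in hup.
    eapply Rle_trans; [exact hup |].
    replace (exp (- (2 * INR n * p)) * (INR n * p) * (2 * p ^ 2 / (3 * (1 - p ^ 2))))
      with (exp (- (2 * INR n * p)) * (INR n * (2 * p ^ 3 / (3 * (1 - p ^ 2)))))
      by (field; nra).
    apply Rmult_le_compat_l; [left; apply exp_pos |]. nra.
Qed.

Lemma h12_sub_g (n : nat) (p : R) : (1 <= n)%nat -> 0 < p < 1 ->
  h12 n p - g (INR n * p)
    = p / (1 - p) + (exp (- (INR n * p)) - (1 - p) ^ n) * (2 + / (INR n * p)).
Proof.
  intros hn hp. pose proof (lt_0_INR n hn).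
  unfold h12, g. field. lra.
Qed.

Lemma hsym_sub_g (n : nat) (p : R) : (1 <= n)%nat -> 0 < p < 1 ->
  2 * hsym n p - (g (INR n * p) + exp (- (2 * INR n * p)) * g (- (INR n * p)))
    = p / (1 - p) + 4 * (exp (- (INR n * p)) - (1 - p) ^ n)
      + (exp (- (2 * INR n * p)) - (1 - p) ^ n / (1 + p) ^ n) * (/ (INR n * p) - / (1 + p))
      - exp (- (2 * INR n * p)) * (p / (1 + p)).
Proof.
  intros hn hp. pose proof (lt_0_INR n hn).
  assert (hE2 : exp (- (2 * INR n * p)) = exp (- (INR n * p)) * exp (- (INR n * p)))
    by (rewrite <- exp_plus; f_equal; ring).
  assert (hEinv : exp (- - (INR n * p)) = / exp (- (INR n * p)))
    by (rewrite <- exp_Ropp; reflexivity).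
  pose proof (exp_pos (- (INR n * p))).
  assert (0 < (1 + p) ^ n) by (apply pow_lt; lra).
  unfold hsym, h12, g. rewrite hE2, hEinv.
  replace (1 - - p) with (1 + p) by ring.
  field. repeat split; lra.
Qed.

Lemma inv_sqrt_exp_1 : / sqrt (exp 1) = exp (- (1 / 2)).
Proof.
  replace (exp 1) with (exp (1 / 2) * exp (1 / 2)) by (rewrite <- exp_plus; f_equal; lra).
  rewrite sqrt_square, exp_Ropp by (left; apply exp_pos). reflexivity.
Qed.

Lemma hsym_coef_ge : 2 / 25 <= (4 * exp (3 / 2) - 1) / (6 * exp 3).
Proof.
  set (y := exp (3 / 2)).
  assert (hy3 : exp 3 = y * y) by (unfold y; rewrite <- exp_plus; f_equal; lra).
  assert (hy : 5 / 2 <= y) by (unfold y; pose proof (exp_ineq1_le (3 / 2)); lra).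
  assert (hyy : y * y <= 27).
  { rewrite <- hy3. replace 3 with (1 + 1 + 1) by lra. rewrite !exp_plus.
    pose proof exp_le_3; pose proof (exp_pos 1).
    assert (exp 1 * exp 1 <= 9) by nra. nra. }
  rewrite hy3.
  replace ((4 * y - 1) / (6 * (y * y)))
    with (2 / 25 + (100 * y - 25 - 12 * (y * y)) / (150 * (y * y))) by (field; lra).
  enough (0 <= (100 * y - 25 - 12 * (y * y)) / (150 * (y * y))) by lra.
  apply Rdiv_le_0_compat; nra.
Qed.

Lemma ratio_remainder_le (p : R) : 0 < p < 1 ->
  2 * p ^ 2 / (3 * (1 - p ^ 2)) - p / (1 + p) <= 4 / 25 * (p ^ 2 / (1 - p ^ 2) ^ 2).
Proof.
  intros hp. assert (0 < 1 - p ^ 2) by nra.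
  replace (4 / 25 * (p ^ 2 / (1 - p ^ 2) ^ 2))
    with ((2 * p ^ 2 / (3 * (1 - p ^ 2)) - p / (1 + p))
          + p * (125 * p ^ 3 - 75 * p ^ 2 - 113 * p + 75) / (75 * (1 - p ^ 2) ^ 2))
    by (field; repeat split; nra).
  enough (0 <= p * (125 * p ^ 3 - 75 * p ^ 2 - 113 * p + 75) / (75 * (1 - p ^ 2) ^ 2)) by lra.
  apply Rdiv_le_0_compat; [| nra].
  (* On [0, 1] the cubic exceeds (p - 39/50)^2 (125 p + 120) by 1.992 - 1.85 p. *)
  assert (0 <= (p - 39 / 50) ^ 2 * (125 * p + 120))
    by (apply Rmult_le_pos; [apply pow2_ge_0 | lra]).
  nra.
Qed.

Lemma g_le_h12 (n : nat) (p : R) : (1 <= n)%nat -> 0 < p < 1 -> g (INR n * p) <= h12 n p.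
Proof.
  intros hn hp. pose proof (lt_0_INR n hn).
  pose proof (h12_sub_g n p hn hp) as hid; pose proof (one_sub_pow_gap n p hp) as [hgap _].
  assert (0 < p / (1 - p)) by (apply Rdiv_lt_0_compat; lra).
  assert (0 < / (INR n * p)) by (apply Rinv_0_lt_compat; nra).
  nra.
Qed.

Lemma h12_le (n : nat) (p : R) : (1 <= n)%nat -> 0 < p < 1 ->
  h12 n p <= g (INR n * p) + (1 + / sqrt (exp 1)) * (p / (1 - p)).
Proof.
  intros hn hp. pose proof (lt_0_INR n hn).
  set (x := INR n * p). assert (hx : 0 < x) by (unfold x; nra).
  set (X := p / (1 - p)). assert (0 < X) by (apply Rdiv_lt_0_compat; lra).
  pose proof (h12_sub_g n p hn hp) as hid; pose proof (one_sub_pow_gap n p hp) as [_ hgap].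
  fold x X in hid, hgap.
  assert (hgap' : (exp (- x) - (1 - p) ^ n) * (2 + / x) <= (x + 1 / 2) * exp (- x) * X).
  { eapply Rle_trans.
    - apply Rmult_le_compat_r; [| exact hgap].
      assert (0 < / x) by (apply Rinv_0_lt_compat; lra); lra.
    - right; field; lra. }
  pose proof (add_mul_exp_neg_le x (1 / 2)) as hexp.
  replace (1 / 2 - 1) with (- (1 / 2)) in hexp by lra.
  rewrite inv_sqrt_exp_1. nra.
Qed.

Lemma ratio_gap_term_le (n : nat) (p : R) : (1 <= n)%nat -> 0 < p < 1 ->
  (exp (- (2 * INR n * p)) - (1 - p) ^ n / (1 + p) ^ n) * (/ (INR n * p) - / (1 + p))
    - exp (- (2 * INR n * p)) * (p / (1 + p))
  <= 2 * ((4 * exp (3 / 2) - 1) / (6 * exp 3)) * (p ^ 2 / (1 - p ^ 2) ^ 2).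
Proof.
  intros hn hp. pose proof (lt_0_INR n hn).
  set (x := INR n * p). assert (hx : 0 < x) by (unfold x; nra).
  set (E2 := exp (- (2 * INR n * p))).
  set (w := E2 - (1 - p) ^ n / (1 + p) ^ n).
  set (r := 2 * p ^ 2 / (3 * (1 - p ^ 2))).
  set (Q := p ^ 2 / (1 - p ^ 2) ^ 2).
  pose proof (pow_ratio_gap n p hp) as [hw0 hw1]; fold x E2 w r in hw0, hw1.
  assert (hE2 : E2 <= 1).
  { unfold E2; rewrite <- exp_0. apply Rlt_le, exp_increasing. nra. }
  assert (hw : w * (/ x - / (1 + p)) <= E2 * r).
  { assert (0 < / (1 + p)) by (apply Rinv_0_lt_compat; lra).
    assert (0 < / x) by (apply Rinv_0_lt_compat; lra).
    apply Rle_trans with (w * / x); [nra |].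
    apply Rle_trans with (E2 * x * r * / x).
    - apply Rmult_le_compat_r; lra.
    - right; field; lra. }
  pose proof (ratio_remainder_le p hp) as hrem; pose proof hsym_coef_ge as hC.
  fold r Q in hrem.
  assert (0 <= Q) by (unfold Q; apply Rdiv_le_0_compat; [apply pow2_ge_0 | apply pow_lt; nra]).
  assert (4 / 25 * Q <= 2 * ((4 * exp (3 / 2) - 1) / (6 * exp 3)) * Q)
    by (apply Rmult_le_compat_r; lra).
  assert (0 < E2) by apply exp_pos.
  destruct (Rle_or_lt (r - p / (1 + p)) 0); nra.
Qed.

Lemma hsym_le (n : nat) (p : R) : (1 <= n)%nat -> 0 < p < 1 ->
  hsym n p <=
    / 2 * (g (INR n * p) + exp (- (2 * INR n * p)) * g (- (INR n * p)))
    + / 2 * (1 + 2 / exp (3 / 4)) * (p / (1 - p))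
    + (4 * exp (3 / 2) - 1) / (6 * exp 3) * (p ^ 2 / (1 - p ^ 2) ^ 2).
Proof.
  intros hn hp. pose proof (lt_0_INR n hn).
  set (x := INR n * p). assert (hx : 0 < x) by (unfold x; nra).
  set (X := p / (1 - p)). assert (0 < X) by (apply Rdiv_lt_0_compat; lra).
  pose proof (hsym_sub_g n p hn hp) as hid.
  pose proof (one_sub_pow_gap n p hp) as [_ hgap].
  pose proof (ratio_gap_term_le n p hn hp) as htail.
  fold x X in hid, hgap, htail.
  (* [x e^{-x} <= e^{-1}] already beats the constant [e^{-3/4}] of the statement. *)
  assert (h4 : 4 * (exp (- x) - (1 - p) ^ n) <= 2 / exp (3 / 4) * X).
  { pose proof (add_mul_exp_neg_le x 0) as hexp. rewrite Rplus_0_r in hexp.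
    assert (exp (0 - 1) <= / exp (3 / 4)).
    { rewrite <- exp_Ropp. left; apply exp_increasing; lra. }
    unfold Rdiv at 1. nra. }
  lra.
Qed.

Theorem lemma5 (s : nat) (p : R) (hs : (1 <= s)%nat) (hp0 : 0 < p) (hp1 : p < 1) :
  (g (INR s * p) <= h12 s p /\
   h12 s p <= g (INR s * p) + (1 + / sqrt (exp 1)) * (p / (1 - p))) /\
  hsym s p <=
    / 2 * (g (INR s * p) + exp (- (2 * INR s * p)) * g (- (INR s * p)))
    + / 2 * (1 + 2 / exp (3 / 4)) * (p / (1 - p))
    + (4 * exp (3 / 2) - 1) / (6 * exp 3) * (p ^ 2 / (1 - p ^ 2) ^ 2).
Proof.
  assert (hp : 0 < p < 1) by lra.
  split; [split |].
  - exact (g_le_h12 s p hs hp).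
  - exact (h12_le s p hs hp).
  - exact (hsym_le s p hs hp).
Qed.
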